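(* Let $X$ be a subshift with language $\mathcal L$, let $K$ be a positive integer (used in the density $\mathcal D$), let $w\in\mathcal L_n$, and let $\mathcal B=\{z^{(1)},\dots,z^{(p)}\}\subseteq\mathcal L_m$ satisfy: for every $y\in\mathcal L$ with $|y|>\max\{n,m\}$ and all $1\le j<j'\le|y|-\max\{m,n\}$ with $y_{[j,j+n-1]}=y_{[j',j'+n-1]}=w$, there exist $1\le i\le p$ and $j\le k<j'$ with $y_{[k,k+m-1]}=z^{(i)}$. Then for every $x\in X$ there exists $1\le j\le p$ with $$\mathcal D(z^{(j)},x)\ge\frac{1}{p(1+3n/m)}\,\mathcal D(w,x).$$
   Context: A subshift is a nonempty closed $X\subseteq\mathcal A^{\mathbb N}$ ($\mathcal A$ finite) invariant under the left shift; its language $\mathcal L$ is the set of finite nonempty words occurring in its points; $\mathcal L_n$ those of length $n$. (In the paper $K$ is the eventual constant value of $|\mathcal L_{n+1}|-|\mathcal L_n|$.) Upper density: for $x\in X$, $w\in\mathcal L$ with $n=|w|$, let $r(w,x,j)=1$ if $x_{[k,k+n-1]}=w$ for some $k$ with $(j-1)(K+1)n<k\le j(K+1)n$ and $0$ otherwise, and $\mathcal D(w,x)=\limsup_{N\to\infty}\frac1N\sum_{j=1}^Nr(w,x,j)$. *)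

From Stdlib Require Import Reals List Arith ClassicalEpsilon.
Import ListNotations.
Open Scope R_scope.

(* A point of the full shift is a map nat -> A; positions are natural numbers. *)

Definition wordAt {A : Type} (x : nat -> A) (k n : nat) : list A :=
  map (fun t => x (k + t)%nat) (seq 0 n).

(* y_{[j, j+n-1]} for a finite word y, with 1-indexed position j. *)
Definition subword {A : Type} (y : list A) (j n : nat) : list A :=
  firstn n (skipn (j - 1) y).

Definition shift {A : Type} (x : nat -> A) : nat -> A := fun i => x (S i).

Definition IsSubshift {A : Type} (X : (nat -> A) -> Prop) : Prop :=
  (exists x, X x) /\
  (forall x, (forall N : nat, exists y, X y /\ forall i, (i < N)%nat -> y i = x i) -> X x) /\
  (forall x, X x -> X (shift x)).

Definition InLang {A : Type} (X : (nat -> A) -> Prop) (u : list A) : Prop :=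
  u <> [] /\ exists x k, X x /\ wordAt x k (length u) = u.

Definition rInd {A : Type} (K : nat) (w : list A) (x : nat -> A) (j : nat) : R :=
  let n := length w in
  if excluded_middle_informative
       (exists k, ((j - 1) * (K + 1) * n < k)%nat /\ (k <= j * (K + 1) * n)%nat
                  /\ wordAt x k n = w)
  then 1 else 0.

Definition avgR {A : Type} (K : nat) (w : list A) (x : nat -> A) (N : nat) : R :=
  fold_right Rplus 0 (map (rInd K w x) (seq 1 N)) / INR N.

Definition IsLimsup (u : nat -> R) (l : R) : Prop :=
  (forall eps, eps > 0 -> exists N, forall k, (N <= k)%nat -> u k <= l + eps) /\
  (forall eps, eps > 0 -> forall N, exists k, (N <= k)%nat /\ u k >= l - eps).

Definition limsup (u : nat -> R) : R := epsilon (inhabits 0) (IsLimsup u).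

Definition Dens {A : Type} (K : nat) (w : list A) (x : nat -> A) : R :=
  limsup (fun N => avgR K w x N).

(* Cut the positions of x into w-blocks of length (K+1)n and z-blocks of length (K+1)m.
   A w-block containing an occurrence of w and followed by another such block is charged
   to the z-block containing the first start of some z^(i) after its first occurrence; by
   the separation hypothesis that start precedes the first occurrence in every later
   w-block.  Hence a z-block is charged by at most one w-block whose first occurrence lies
   before it and by at most ceil(m/n) + 1 w-blocks overlapping it, which gives
   N avg_w(N) <= (ceil(m/n) + 2) sum_i M avg_(z^(i))(M) + 1 for M ~ N n / m.  In the
   limsup this becomes D(w,x) <= (1 + 3n/m) sum_i D(z^(i),x), and the largest of the p
   densities on the right gives the claim. *)

From Stdlib Require Import Reals List Arith Wf_nat Lia Lra ClassicalEpsilon Classical.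
From Coquelicot Require Coquelicot.
Open Scope R_scope.

Definition sumR (f : nat -> R) (s N : nat) : R := fold_right Rplus 0 (map f (seq s N)).

Lemma sumR_0 f s : sumR f s 0 = 0.
Proof. reflexivity. Qed.

Lemma sumR_S f s N : sumR f s (S N) = f s + sumR f (S s) N.
Proof. reflexivity. Qed.

Lemma sumR_ext f g s N :
  (forall j, (s <= j < s + N)%nat -> f j = g j) -> sumR f s N = sumR g s N.
Proof.
  revert s; induction N as [|N IH]; intros s H; [reflexivity|].
  rewrite !sumR_S, (H s) by lia. f_equal. apply IH. intros; apply H; lia.
Qed.

Lemma sumR_le f g s N :
  (forall j, (s <= j < s + N)%nat -> f j <= g j) -> sumR f s N <= sumR g s N.
Proof.
  revert s; induction N as [|N IH]; intros s H; [rewrite !sumR_0; lra|].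
  rewrite !sumR_S.
  assert (f s <= g s) by (apply H; lia).
  assert (sumR f (S s) N <= sumR g (S s) N) by (apply IH; intros; apply H; lia).
  lra.
Qed.

Lemma sumR_plus f g s N : sumR (fun j => f j + g j) s N = sumR f s N + sumR g s N.
Proof.
  revert s; induction N as [|N IH]; intros s; [rewrite !sumR_0; lra|].
  rewrite !sumR_S, IH; lra.
Qed.

Lemma sumR_scal c f s N : sumR (fun j => c * f j) s N = c * sumR f s N.
Proof.
  revert s; induction N as [|N IH]; intros s; [rewrite !sumR_0; lra|].
  rewrite !sumR_S, IH; lra.
Qed.

Lemma sumR_const c s N : sumR (fun _ => c) s N = INR N * c.
Proof.
  revert s; induction N as [|N IH]; intros s; [rewrite sumR_0; simpl; lra|].
  rewrite sumR_S, IH, S_INR; lra.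
Qed.

Lemma sumR_swap (F : nat -> nat -> R) s1 N1 s2 N2 :
  sumR (fun i => sumR (F i) s2 N2) s1 N1 = sumR (fun j => sumR (fun i => F i j) s1 N1) s2 N2.
Proof.
  revert s1; induction N1 as [|N1 IH]; intros s1.
  - rewrite sumR_0, (sumR_ext _ (fun _ => 0)), sumR_const by reflexivity. lra.
  - rewrite sumR_S, IH, <- sumR_plus. reflexivity.
Qed.

Lemma sumR_nonneg f s N : (forall j, (s <= j < s + N)%nat -> 0 <= f j) -> 0 <= sumR f s N.
Proof.
  intros H. rewrite <- (Rmult_0_r (INR N)), <- (sumR_const 0 s). now apply sumR_le.
Qed.

Lemma sumR_ge_term f s N j :
  (forall i, (s <= i < s + N)%nat -> 0 <= f i) -> (s <= j < s + N)%nat -> f j <= sumR f s N.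
Proof.
  revert s; induction N as [|N IH]; intros s H Hj; [lia|].
  rewrite sumR_S. destruct (Nat.eq_dec j s) as [->|Hne].
  - assert (0 <= sumR f (S s) N) by (apply sumR_nonneg; intros; apply H; lia). lra.
  - assert (f j <= sumR f (S s) N) by (apply IH; [intros; apply H|]; lia).
    assert (0 <= f s) by (apply H; lia). lra.
Qed.

Lemma sumR_pigeonhole f s N :
  (1 <= N)%nat -> exists j, (s <= j < s + N)%nat /\ sumR f s N <= INR N * f j.
Proof.
  revert s; induction N as [|N IH]; intros s HN; [lia|].
  destruct (Nat.eq_dec N 0) as [->|HN0].
  - exists s. split; [lia|]. rewrite sumR_S, sumR_0. simpl; lra.
  - destruct (IH (S s)) as [j [Hj Hle]]; [lia|].
    rewrite sumR_S, S_INR.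
    destruct (Rle_lt_dec (f s) (f j)).
    + exists j. split; [lia|]. lra.
    + exists s. split; [lia|].
      assert (INR N * f j <= INR N * f s) by (apply Rmult_le_compat_l; [apply pos_INR | lra]).
      lra.
Qed.

Definition indP (P : Prop) : R := if excluded_middle_informative P then 1 else 0.

Lemma indP_T (P : Prop) : P -> indP P = 1.
Proof. intros H; unfold indP; destruct excluded_middle_informative; tauto. Qed.

Lemma indP_F (P : Prop) : ~ P -> indP P = 0.
Proof. intros H; unfold indP; destruct excluded_middle_informative; tauto. Qed.

Lemma indP_01 (P : Prop) : 0 <= indP P <= 1.
Proof. unfold indP; destruct excluded_middle_informative; lra. Qed.

Lemma indP_imp (P Q : Prop) : (P -> Q) -> indP P <= indP Q.
Proof. intros H; unfold indP; do 2 destruct excluded_middle_informative; try lra; tauto. Qed.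

Lemma indP_or (P Q S : Prop) : (P -> Q \/ S) -> indP P <= indP Q + indP S.
Proof. intros H; unfold indP; do 3 destruct excluded_middle_informative; try lra; tauto. Qed.

Lemma indP_le_sumR (P : Prop) (Q : nat -> Prop) s N :
  (P -> exists i, (s <= i < s + N)%nat /\ Q i) -> indP P <= sumR (fun i => indP (Q i)) s N.
Proof.
  intros H. destruct (classic P) as [HP|HP].
  - destruct (H HP) as [i [Hi HQ]]. rewrite (indP_T P), <- (indP_T (Q i)) by assumption.
    apply (sumR_ge_term (fun i => indP (Q i))); [intros; apply indP_01 | exact Hi].
  - rewrite indP_F by assumption. apply sumR_nonneg; intros; apply indP_01.
Qed.

Lemma sumR_indP_empty (P : nat -> Prop) s N :
  (forall j, (s <= j < s + N)%nat -> ~ P j) -> sumR (fun j => indP (P j)) s N = 0.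
Proof.
  intros H. rewrite (sumR_ext _ (fun _ => 0)), sumR_const; [lra|].
  intros; apply indP_F; auto.
Qed.

Lemma sumR_indP_at_most_one (P : nat -> Prop) s N :
  (forall j1 j2, P j1 -> P j2 -> j1 = j2) -> sumR (fun j => indP (P j)) s N <= 1.
Proof.
  intros Hu; revert s; induction N as [|N IH]; intros s; [rewrite !sumR_0; lra|].
  rewrite sumR_S. destruct (classic (P s)) as [Ps|Ps].
  - rewrite indP_T, sumR_indP_empty by (auto; intros j Hj Pj; specialize (Hu _ _ Ps Pj); lia).
    lra.
  - rewrite indP_F by assumption. specialize (IH (S s)). lra.
Qed.

Lemma sumR_indP_interval lo hi s N :
  sumR (fun j => indP (lo <= j <= hi)%nat) s N <= INR (S hi - Nat.max lo s).
Proof.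
  revert s; induction N as [|N IH]; intros s; [rewrite sumR_0; apply pos_INR|].
  rewrite sumR_S. specialize (IH (S s)).
  destruct (classic (lo <= s <= hi)%nat).
  - rewrite indP_T by assumption.
    replace (S hi - Nat.max lo s)%nat with (S (S hi - Nat.max lo (S s))) by lia.
    rewrite S_INR; lra.
  - rewrite indP_F by assumption.
    destruct (Nat.lt_ge_cases s lo).
    + replace (Nat.max lo s) with (Nat.max lo (S s)) by lia. lra.
    + replace (S hi - Nat.max lo (S s))%nat with 0%nat in IH by lia.
      pose proof (pos_INR (S hi - Nat.max lo s)). simpl in IH. lra.
Qed.

Definition least (P : nat -> Prop) : nat :=
  epsilon (inhabits 0%nat) (fun k => P k /\ forall k', P k' -> (k <= k')%nat).

Lemma least_spec (P : nat -> Prop) :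
  (exists k, P k) -> P (least P) /\ forall k', P k' -> (least P <= k')%nat.
Proof.
  intros Hex. apply (epsilon_spec (inhabits 0%nat) (fun k => P k /\ _)).
  destruct (dec_inh_nat_subset_has_unique_least_element P (fun k => classic (P k)) Hex)
    as [k [Hk _]].
  exists k; exact Hk.
Qed.

Lemma sumR_indP_diam (P : nat -> Prop) d s N :
  (forall j1 j2, P j1 -> P j2 -> (j1 <= j2)%nat -> (j2 - j1 <= d)%nat) ->
  sumR (fun j => indP (P j)) s N <= INR (S d).
Proof.
  intros Hd. destruct (classic (exists j, P j)) as [Hex|Hno].
  - destruct (least_spec P Hex) as [P0 Hmin].
    apply Rle_trans with (sumR (fun j => indP (least P <= j <= least P + d)%nat) s N).
    + apply sumR_le; intros j _. apply indP_imp. intros Pj.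
      pose proof (Hmin j Pj). pose proof (Hd _ j P0 Pj ltac:(lia)). lia.
    + eapply Rle_trans; [apply sumR_indP_interval | apply le_INR; lia].
  - rewrite sumR_indP_empty by (intros j _ Pj; eauto). apply pos_INR.
Qed.

Lemma sumR_indP_fibres (P Q : nat -> Prop) (R : nat -> nat -> Prop) c N M :
  0 <= c ->
  (forall j, (1 <= j <= N)%nat -> P j -> exists be, (1 <= be <= M)%nat /\ R j be) ->
  (forall j be, P j -> R j be -> Q be) ->
  (forall be, sumR (fun j => indP (P j /\ R j be)) 1 N <= c) ->
  sumR (fun j => indP (P j)) 1 N <= c * sumR (fun be => indP (Q be)) 1 M.
Proof.
  intros Hc Hcover HQ Hfib.
  apply Rle_trans with (sumR (fun j => sumR (fun be => indP (P j /\ R j be)) 1 M) 1 N).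
  { apply sumR_le; intros j Hj. apply indP_le_sumR. intros Pj.
    destruct (Hcover j ltac:(lia) Pj) as [be [Hbe Rbe]]. exists be; split; [lia | auto]. }
  rewrite sumR_swap, <- sumR_scal. apply sumR_le; intros be _.
  destruct (classic (Q be)) as [Qbe|Qbe].
  - rewrite indP_T by assumption. rewrite Rmult_1_r. apply Hfib.
  - rewrite indP_F, Rmult_0_r by assumption.
    rewrite sumR_indP_empty by (intros j _ [Pj Rj]; eauto). lra.
Qed.

Definition in_block (L j k : nat) : Prop := ((j - 1) * L < k <= j * L)%nat.

Definition block_meets (L : nat) (P : nat -> Prop) (j : nat) : Prop :=
  exists k, in_block L j k /\ P k.

Lemma in_block_exists L k : (1 <= L)%nat -> (1 <= k)%nat -> exists j, (1 <= j)%nat /\ in_block L j k.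
Proof.
  intros HL Hk. exists ((k + L - 1) / L)%nat.
  pose proof (Nat.div_mod_eq (k + L - 1) L) as E.
  pose proof (Nat.mod_upper_bound (k + L - 1) L ltac:(lia)).
  destruct ((k + L - 1) / L)%nat as [|j]; [lia|]. unfold in_block.
  replace (S j - 1)%nat with j by lia. split; [lia | nia].
Qed.

Lemma overlapping_blocks_diam a b be j1 j2 :
  (1 <= a)%nat -> ((be - 1) * b < j1 * a)%nat -> ((j2 - 1) * a < be * b)%nat ->
  (j1 <= j2)%nat -> (j2 - j1 <= (b + a - 1) / a)%nat.
Proof.
  intros Ha H1 H2 H12. apply Nat.div_le_lower_bound; [lia|].
  destruct (Nat.eq_dec j1 j2) as [->|Hne]; [lia|].
  destruct be as [|be]; [simpl in H2; lia|].
  replace (S be - 1)%nat with be in H1 by lia.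
  assert ((j2 - 1 - j1) * a < b)%nat by nia.
  nia.
Qed.

(* [(b + a - 1) / a] is the ceiling of [b / a]. *)
Definition fibre_bound (a b : nat) : nat := ((b + a - 1) / a + 2)%nat.

Section BlockCounting.

Variables (a b N M : nat) (Wpos Zpos : nat -> Prop).
Hypotheses (Ha : (1 <= a)%nat) (Hb : (1 <= b)%nat) (HNM : (N * a <= M * b)%nat).
Hypothesis Zpos_between :
  forall k1 k2, (k1 < k2)%nat -> Wpos k1 -> Wpos k2 -> exists q, (k1 <= q < k2)%nat /\ Zpos q.

Let first_W (j : nat) : nat := least (fun k => in_block a j k /\ Wpos k).

Let next_Z (j : nat) : nat := least (fun q => (first_W j <= q)%nat /\ Zpos q).

Let nonlast (j : nat) : Prop :=
  block_meets a Wpos j /\ exists j', (j < j' <= N)%nat /\ block_meets a Wpos j'.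

Lemma first_W_spec j : block_meets a Wpos j -> in_block a j (first_W j) /\ Wpos (first_W j).
Proof. intros Hj. exact (proj1 (least_spec _ Hj)). Qed.

Lemma first_W_lt j j' :
  block_meets a Wpos j -> block_meets a Wpos j' -> (j < j')%nat -> (first_W j < first_W j')%nat.
Proof.
  intros Hj Hj' Hlt.
  destruct (first_W_spec j Hj) as [[_ B1] _]. destruct (first_W_spec j' Hj') as [[B2 _] _].
  assert (j * a <= (j' - 1) * a)%nat by (apply Nat.mul_le_mono_r; lia). lia.
Qed.

Lemma next_Z_spec j :
  nonlast j ->
  (first_W j <= next_Z j)%nat /\ Zpos (next_Z j) /\
  forall j', (j < j')%nat -> block_meets a Wpos j' -> (next_Z j < first_W j')%nat.
Proof.
  intros [Hj [j0 [Hj0 Hm0]]].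
  assert (Hbetween : forall j', (j < j')%nat -> block_meets a Wpos j' ->
            exists q, (first_W j <= q < first_W j')%nat /\ Zpos q).
  { intros j' Hlt Hj'. apply Zpos_between.
    - now apply first_W_lt.
    - apply first_W_spec, Hj.
    - apply first_W_spec, Hj'. }
  destruct (least_spec (fun q => (first_W j <= q)%nat /\ Zpos q)) as [[Hle HT] Hmin].
  { destruct (Hbetween j0 ltac:(lia) Hm0) as [q [Hq HT]]. exists q; split; [lia | exact HT]. }
  split; [exact Hle | split; [exact HT|]].
  intros j' Hlt Hj'. destruct (Hbetween j' Hlt Hj') as [q [Hq HTq]].
  assert (next_Z j <= q)%nat by (apply Hmin; split; [lia | exact HTq]). lia.
Qed.

Lemma sumR_meets_le_nonlast :
  sumR (fun j => indP (block_meets a Wpos j)) 1 N <= sumR (fun j => indP (nonlast j)) 1 N + 1.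
Proof.
  set (last := fun j => block_meets a Wpos j /\ (j <= N)%nat /\
                        ~ exists j', (j < j' <= N)%nat /\ block_meets a Wpos j').
  apply Rle_trans with (sumR (fun j => indP (nonlast j) + indP (last j)) 1 N).
  - apply sumR_le; intros j Hj. apply indP_or. intros Hm.
    destruct (classic (exists j', (j < j' <= N)%nat /\ block_meets a Wpos j')).
    + left; split; assumption.
    + right; repeat split; auto; lia.
  - rewrite sumR_plus.
    assert (sumR (fun j => indP (last j)) 1 N <= 1); [|lra].
    apply sumR_indP_at_most_one. intros j1 j2 [A1 [B1 C1]] [A2 [B2 C2]].
    destruct (Nat.lt_total j1 j2) as [H|[H|H]]; [exfalso | exact H | exfalso].
    + apply C1; exists j2; split; [lia | exact A2].
    + apply C2; exists j1; split; [lia | exact A1].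
Qed.

Lemma next_Z_in_block j :
  (1 <= j <= N)%nat -> nonlast j -> exists be, (1 <= be <= M)%nat /\ in_block b be (next_Z j).
Proof.
  intros Hj Hnl. destruct (next_Z_spec j Hnl) as [Hle [_ Hlt]].
  destruct Hnl as [Hm [j' [Hj' Hm']]].
  pose proof (Hlt j' ltac:(lia) Hm') as Hq.
  destruct (first_W_spec j Hm) as [[B1 _] _]. destruct (first_W_spec j' Hm') as [[_ B2] _].
  assert (j' * a <= N * a)%nat by (apply Nat.mul_le_mono_r; lia).
  destruct (in_block_exists b (next_Z j) Hb ltac:(nia)) as [be [Hbe Hin]].
  exists be. split; [|exact Hin]. destruct Hin as [I1 _].
  split; [exact Hbe|]. destruct (Nat.le_gt_cases be M) as [|Hgt]; [assumption|].
  assert (M * b <= (be - 1) * b)%nat by (apply Nat.mul_le_mono_r; lia). lia.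
Qed.

(* A block [be] receives at most one [j] whose first occurrence lies before it (the
   [next_Z] of an earlier [j] precedes the first occurrence of any later one); every other
   [j] it receives has a block overlapping [be]. *)
Lemma sumR_next_Z_fibre be :
  sumR (fun j => indP (nonlast j /\ in_block b be (next_Z j))) 1 N <= INR (fibre_bound a b).
Proof.
  set (early := fun j => nonlast j /\ in_block b be (next_Z j) /\ (first_W j <= (be - 1) * b)%nat).
  set (overlap := fun j => ((be - 1) * b < j * a)%nat /\ ((j - 1) * a < be * b)%nat).
  apply Rle_trans with (sumR (fun j => indP (early j) + indP (overlap j)) 1 N).
  { apply sumR_le; intros j _. apply indP_or. intros [Hnl Hin].
    destruct (le_lt_dec (first_W j) ((be - 1) * b)) as [Hle|Hgt]; [left; split; [|split]; assumption|].
    right. destruct (next_Z_spec j Hnl) as [Hle _].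
    destruct (first_W_spec j (proj1 Hnl)) as [[B1 B2] _]. destruct Hin. split; lia. }
  unfold fibre_bound. rewrite sumR_plus, plus_INR. replace (INR 2) with (1 + 1) by (simpl; lra).
  assert (Hearly : sumR (fun j => indP (early j)) 1 N <= 1).
  { apply sumR_indP_at_most_one.
    assert (Hnot : forall u v, early u -> early v -> ~ (u < v)%nat).
    { intros u v [Hu [[Iu _] _]] [[Hv _] [_ Lv]] Huv.
      destruct (next_Z_spec u Hu) as [_ [_ Hlt]]. pose proof (Hlt v Huv Hv). lia. }
    intros j1 j2 E1 E2. destruct (Nat.lt_total j1 j2) as [H|[H|H]]; [exfalso | exact H | exfalso].
    - exact (Hnot j1 j2 E1 E2 H).
    - exact (Hnot j2 j1 E2 E1 H). }
  assert (Hoverlap : sumR (fun j => indP (overlap j)) 1 N <= INR (S ((b + a - 1) / a))).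
  { apply sumR_indP_diam. intros j1 j2 [O1 _] [_ O2] H12.
    exact (overlapping_blocks_diam a b be j1 j2 Ha O1 O2 H12). }
  rewrite S_INR in Hoverlap. lra.
Qed.

Lemma sumR_block_meets_le :
  sumR (fun j => indP (block_meets a Wpos j)) 1 N <=
  INR (fibre_bound a b) * sumR (fun be => indP (block_meets b Zpos be)) 1 M + 1.
Proof.
  eapply Rle_trans; [apply sumR_meets_le_nonlast|]. apply Rplus_le_compat_r.
  apply (sumR_indP_fibres _ _ (fun j be => in_block b be (next_Z j))).
  - apply pos_INR.
  - exact next_Z_in_block.
  - intros j be Hnl Hin. exists (next_Z j). split; [exact Hin|]. apply (next_Z_spec j Hnl).
  - exact sumR_next_Z_fibre.
Qed.

End BlockCounting.

Definition SeparatingFamily {A : Type} (X : (nat -> A) -> Prop) (n m p : nat)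
    (w : list A) (z : nat -> list A) : Prop :=
  forall y : list A, InLang X y -> (length y > Nat.max n m)%nat ->
  forall j j' : nat, (1 <= j)%nat -> (j < j')%nat ->
  (j' <= length y - Nat.max m n)%nat ->
  subword y j n = w -> subword y j' n = w ->
  exists i k, (1 <= i <= p)%nat /\ (j <= k < j')%nat /\ subword y k m = z i.

Lemma length_wordAt {A : Type} (x : nat -> A) k L : length (wordAt x k L) = L.
Proof. unfold wordAt; rewrite length_map, length_seq; reflexivity. Qed.

Lemma firstn_seq n s L : (n <= L)%nat -> firstn n (seq s L) = seq s n.
Proof.
  intros H. replace L with (n + (L - n))%nat by lia.
  rewrite seq_app, firstn_app, length_seq, Nat.sub_diag, firstn_all2 by (rewrite length_seq; lia).
  simpl. apply app_nil_r.
Qed.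

Lemma map_seq_offset {B : Type} (f : nat -> B) s L :
  map f (seq s L) = map (fun t => f (s + t)%nat) (seq 0 L).
Proof.
  revert s f; induction L as [|L IH]; intros s f; [reflexivity|].
  simpl. rewrite Nat.add_0_r, IH, (IH 1%nat). f_equal.
  apply map_ext; intros; f_equal; lia.
Qed.

Lemma subword_wordAt {A : Type} (x : nat -> A) k L j l :
  (j - 1 + l <= L)%nat -> subword (wordAt x k L) j l = wordAt x (k + (j - 1)) l.
Proof.
  intros H. unfold subword, wordAt.
  rewrite skipn_map, firstn_map, skipn_seq, firstn_seq by lia.
  rewrite map_seq_offset. apply map_ext; intros; f_equal; lia.
Qed.

Lemma separating_between_occurrences {A : Type} (X : (nat -> A) -> Prop) n m p w z x :
  SeparatingFamily X n m p w z -> X x ->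
  forall k1 k2, (k1 < k2)%nat -> wordAt x k1 n = w -> wordAt x k2 n = w ->
  exists q, (k1 <= q < k2)%nat /\ exists i, (1 <= i <= p)%nat /\ wordAt x q m = z i.
Proof.
  intros HB Hx k1 k2 Hk H1 H2.
  set (L := (k2 - k1 + 1 + Nat.max m n)%nat).
  assert (Hy : InLang X (wordAt x k1 L)).
  { split.
    - intros E. pose proof (f_equal (@length A) E) as El.
      rewrite length_wordAt in El. simpl in El. lia.
    - exists x, k1. rewrite length_wordAt. split; [exact Hx | reflexivity]. }
  destruct (HB _ Hy ltac:(rewrite length_wordAt; lia) 1%nat (k2 - k1 + 1)%nat)
    as [i [k [Hi [Hk' Hs]]]];
    try (rewrite ?length_wordAt, ?subword_wordAt by lia); try lia.
  - rewrite Nat.add_0_r; exact H1.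
  - replace (k1 + (k2 - k1 + 1 - 1))%nat with k2 by lia. exact H2.
  - exists (k1 + (k - 1))%nat. split; [lia|]. exists i. split; [exact Hi|].
    rewrite subword_wordAt in Hs by (rewrite ?length_wordAt; lia). exact Hs.
Qed.

Lemma rInd_block_meets {A : Type} K (u : list A) x j :
  rInd K u x j =
  indP (block_meets ((K + 1) * length u) (fun k => wordAt x k (length u) = u) j).
Proof.
  unfold rInd, indP, block_meets, in_block. cbv zeta.
  destruct excluded_middle_informative as [[k Hk]|Hno1];
    destruct excluded_middle_informative as [[k' Hk']|Hno2]; auto; exfalso.
  - apply Hno2. exists k. rewrite !Nat.mul_assoc. tauto.
  - apply Hno1. exists k'. rewrite <- !Nat.mul_assoc. tauto.
Qed.

Lemma sumR_rInd_le {A : Type} (X : (nat -> A) -> Prop) K n m p w z x N M :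
  SeparatingFamily X n m p w z -> X x ->
  length w = n -> (forall i, (1 <= i <= p)%nat -> length (z i) = m) ->
  (1 <= n)%nat -> (1 <= m)%nat -> (N * n <= M * m)%nat ->
  sumR (rInd K w x) 1 N <=
  INR (fibre_bound ((K + 1) * n) ((K + 1) * m)) *
    sumR (fun i => sumR (rInd K (z i) x) 1 M) 1 p + 1.
Proof.
  intros HB Hx Hw Hz Hn Hm HNM.
  set (Zpos := fun q => exists i, (1 <= i <= p)%nat /\ wordAt x q m = z i).
  rewrite (sumR_ext _ (fun j => indP (block_meets ((K + 1) * n) (fun k => wordAt x k n = w) j)))
    by (intros; rewrite rInd_block_meets, Hw; reflexivity).
  eapply Rle_trans.
  { apply (sumR_block_meets_le _ ((K + 1) * m) N M _ Zpos); try nia.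
    exact (separating_between_occurrences X n m p w z x HB Hx). }
  apply Rplus_le_compat_r, Rmult_le_compat_l; [apply pos_INR|].
  rewrite sumR_swap. apply sumR_le; intros be _.
  rewrite (sumR_ext _ (fun i => indP (block_meets ((K + 1) * m) (fun k => wordAt x k m = z i) be)))
    by (intros i Hi; rewrite rInd_block_meets, Hz by lia; reflexivity).
  apply indP_le_sumR. intros [q [Hq [i [Hi Hwi]]]].
  exists i. split; [lia|]. exists q. split; assumption.
Qed.

Lemma fibre_bound_scaled K n m :
  (1 <= n)%nat -> (fibre_bound ((K + 1) * n) ((K + 1) * m) * n <= m + 3 * n)%nat.
Proof.
  intros Hn. unfold fibre_bound. set (d := (((K + 1) * m + (K + 1) * n - 1) / ((K + 1) * n))%nat).
  assert (Hd : (d * ((K + 1) * n) <= (K + 1) * m + (K + 1) * n - 1)%nat)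
    by (rewrite Nat.mul_comm; apply Nat.Div0.mul_div_le).
  assert ((K + 1) * (d * n) < (K + 1) * (m + n))%nat by nia.
  assert (d * n < m + n)%nat by (apply (Nat.mul_lt_mono_pos_l (K + 1)); lia).
  lia.
Qed.

Definition LimsupLe (u : nat -> R) (L : R) : Prop :=
  forall eps, eps > 0 -> exists N0, forall N, (N0 <= N)%nat -> u N <= L + eps.

Lemma IsLimsup_le u l L : IsLimsup u l -> LimsupLe u L -> l <= L.
Proof.
  intros [_ Hfreq] HL. apply Rnot_lt_le; intros Hlt.
  destruct (HL ((l - L) / 3)) as [N0 HN0]; [lra|].
  destruct (Hfreq ((l - L) / 3) ltac:(lra) N0) as [k [Hk Huk]].
  specialize (HN0 k Hk). lra.
Qed.

Lemma LimsupLe_eventually_le u v L :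
  (exists N0, forall N, (N0 <= N)%nat -> u N <= v N) -> LimsupLe v L -> LimsupLe u L.
Proof.
  intros [N0 Huv] Hv eps Heps. destruct (Hv eps Heps) as [N1 HN1].
  exists (Nat.max N0 N1). intros N HN.
  specialize (Huv N ltac:(lia)). specialize (HN1 N ltac:(lia)). lra.
Qed.

Lemma LimsupLe_plus u v L1 L2 :
  LimsupLe u L1 -> LimsupLe v L2 -> LimsupLe (fun N => u N + v N) (L1 + L2).
Proof.
  intros Hu Hv eps Heps.
  destruct (Hu (eps / 2)) as [N1 HN1]; [lra|]. destruct (Hv (eps / 2)) as [N2 HN2]; [lra|].
  exists (Nat.max N1 N2). intros N HN.
  specialize (HN1 N ltac:(lia)). specialize (HN2 N ltac:(lia)). lra.
Qed.

Lemma LimsupLe_scal c u L : 0 <= c -> LimsupLe u L -> LimsupLe (fun N => c * u N) (c * L).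
Proof.
  intros Hc Hu eps Heps. destruct (Rle_lt_or_eq_dec 0 c Hc) as [Hpos|<-].
  - destruct (Hu (eps / c)) as [N0 HN0]; [apply Rdiv_lt_0_compat; lra|].
    exists N0. intros N HN. specialize (HN0 N HN).
    apply Rmult_le_compat_l with (r := c) in HN0; [|lra].
    replace (c * (L + eps / c)) with (c * L + eps) in HN0 by (field; lra). exact HN0.
  - exists 0%nat. intros. lra.
Qed.

Lemma LimsupLe_sumR (u : nat -> nat -> R) (L : nat -> R) s p :
  (forall i, (s <= i < s + p)%nat -> LimsupLe (u i) (L i)) ->
  LimsupLe (fun N => sumR (fun i => u i N) s p) (sumR L s p).
Proof.
  revert s; induction p as [|p IH]; intros s Hu.
  - intros eps Heps. exists 0%nat. intros. rewrite !sumR_0. lra.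
  - apply (LimsupLe_plus (u s) (fun N => sumR (fun i => u i N) (S s) p)).
    + apply Hu; lia.
    + apply IH. intros; apply Hu; lia.
Qed.

Lemma LimsupLe_comp u (M : nat -> nat) L :
  (forall N1, exists N0, forall N, (N0 <= N)%nat -> (N1 <= M N)%nat) ->
  LimsupLe u L -> LimsupLe (fun N => u (M N)) L.
Proof.
  intros HM Hu eps Heps. destruct (Hu eps Heps) as [N1 HN1]. destruct (HM N1) as [N0 HN0].
  exists N0. intros N HN. apply HN1, HN0, HN.
Qed.

Lemma LimsupLe_div_INR c : LimsupLe (fun N => c / INR N) 0.
Proof.
  intros eps Heps. destruct (INR_archimed eps (Rabs c) Heps) as [N0 HN0].
  exists (S N0). intros N HN.
  assert (HN0N : INR N0 < INR N) by (apply lt_INR; lia).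
  assert (0 < INR N) by (pose proof (pos_INR N0); lra).
  apply Rmult_le_reg_r with (INR N); [lra|]. unfold Rdiv. rewrite Rmult_assoc, Rinv_l by lra.
  pose proof (Rle_abs c). assert (INR N0 * eps < INR N * eps) by (apply Rmult_lt_compat_r; lra).
  lra.
Qed.

Lemma limsup_spec (u : nat -> R) lo hi :
  (forall N, lo <= u N <= hi) -> IsLimsup u (limsup u).
Proof.
  intros Hb. unfold limsup. apply (epsilon_spec (inhabits 0) (IsLimsup u)).
  destruct (Coquelicot.Lim_seq.ex_LimSup_seq u) as [[l| |] Hl]; simpl in Hl.
  - exists l. split.
    + intros eps He. destruct (Hl (mkposreal eps He)) as [_ [N HN]].
      exists N. intros k Hk. specialize (HN k Hk). simpl in HN. lra.
    + intros eps He N. destruct (Hl (mkposreal eps He)) as [H1 _].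
      destruct (H1 N) as [k [Hk Hu]]. exists k. simpl in Hu. split; [exact Hk | lra].
  - exfalso. destruct (Hl hi 0%nat) as [k [_ Hk]]. specialize (Hb k). lra.
  - exfalso. destruct (Hl lo) as [N HN]. specialize (HN N (le_n _)). specialize (Hb N). lra.
Qed.

Lemma sumR_rInd_avgR {A : Type} K (u : list A) x N :
  (1 <= N)%nat -> sumR (rInd K u x) 1 N = INR N * avgR K u x N.
Proof.
  intros HN. unfold avgR. fold (sumR (rInd K u x) 1 N).
  assert (0 < INR N) by (apply lt_0_INR; lia). field. lra.
Qed.

Lemma rInd_01 {A : Type} K (u : list A) x j : 0 <= rInd K u x j <= 1.
Proof. unfold rInd. destruct excluded_middle_informative; lra. Qed.

Lemma avgR_01 {A : Type} K (u : list A) x N : 0 <= avgR K u x N <= 1.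
Proof.
  destruct N as [|N]; [unfold avgR; simpl; unfold Rdiv; rewrite Rinv_0; lra|].
  assert (HN : 0 < INR (S N)) by (apply lt_0_INR; lia).
  assert (Hs : 0 <= sumR (rInd K u x) 1 (S N) <= INR (S N) * 1).
  { rewrite <- (sumR_const 1 1). split.
    - apply sumR_nonneg; intros; apply rInd_01.
    - apply sumR_le; intros; apply rInd_01. }
  rewrite sumR_rInd_avgR in Hs by lia. split; nra.
Qed.

Lemma Dens_IsLimsup {A : Type} K (u : list A) x : IsLimsup (avgR K u x) (Dens K u x).
Proof. apply (limsup_spec _ 0 1), avgR_01. Qed.

Lemma avgR_le_sum_avgR {A : Type} (X : (nat -> A) -> Prop) K n m p w z x N :
  SeparatingFamily X n m p w z -> X x ->
  length w = n -> (forall i, (1 <= i <= p)%nat -> length (z i) = m) ->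
  (1 <= n)%nat -> (1 <= m)%nat -> (1 <= N)%nat ->
  avgR K w x N <=
  (1 + 3 * INR n / INR m) * sumR (fun i => avgR K (z i) x ((N * n + m - 1) / m)) 1 p
  + (INR (fibre_bound ((K + 1) * n) ((K + 1) * m)) * INR p + 1) / INR N.
Proof.
  intros HB Hx Hw Hz Hn Hm HN.
  set (M := ((N * n + m - 1) / m)%nat).
  assert (HM : (N * n <= M * m <= N * n + m - 1)%nat).
  { pose proof (Nat.div_mod_eq (N * n + m - 1) m).
    pose proof (Nat.mod_upper_bound (N * n + m - 1) m ltac:(lia)). lia. }
  set (c := INR (fibre_bound ((K + 1) * n) ((K + 1) * m))).
  set (Savg := sumR (fun i => avgR K (z i) x M) 1 p).
  assert (Hcount : INR N * avgR K w x N <= c * (INR M * Savg) + 1).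
  { rewrite <- sumR_rInd_avgR by lia. unfold Savg. rewrite <- sumR_scal.
    rewrite (sumR_ext (fun i => INR M * avgR K (z i) x M) (fun i => sumR (rInd K (z i) x) 1 M))
      by (intros; symmetry; apply sumR_rInd_avgR; nia).
    apply (sumR_rInd_le X); auto. lia. }
  assert (HS : 0 <= Savg <= INR p).
  { unfold Savg. rewrite <- (Rmult_1_r (INR p)), <- (sumR_const 1 1). split.
    - apply sumR_nonneg; intros; apply avgR_01.
    - apply sumR_le; intros; apply avgR_01. }
  assert (Hc : c * INR n <= INR m + 3 * INR n).
  { unfold c. rewrite <- mult_INR.
    replace (INR m + 3 * INR n) with (INR (m + 3 * n)) by (rewrite plus_INR, mult_INR; simpl; lra).
    apply le_INR, fibre_bound_scaled, Hn. }
  assert (HMm : INR M * INR m <= INR N * INR n + INR m).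
  { rewrite <- !mult_INR, <- plus_INR. apply le_INR. lia. }
  assert (Rn : 0 < INR n) by (apply lt_0_INR; lia).
  assert (Rm : 0 < INR m) by (apply lt_0_INR; lia).
  assert (RN : 0 < INR N) by (apply lt_0_INR; lia).
  assert (Hc0 : 0 <= c) by apply pos_INR.
  assert (HcM : c * INR M <= (1 + 3 * INR n / INR m) * INR N + c).
  { apply Rmult_le_reg_r with (INR m); [exact Rm|].
    replace (((1 + 3 * INR n / INR m) * INR N + c) * INR m)
      with ((INR m + 3 * INR n) * INR N + c * INR m) by (field; lra).
    assert (c * (INR M * INR m) <= c * (INR N * INR n + INR m)) by (apply Rmult_le_compat_l; lra).
    nra. }
  apply Rmult_le_reg_l with (INR N); [exact RN|].
  replace (INR N * ((1 + 3 * INR n / INR m) * Savg + (c * INR p + 1) / INR N))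
    with ((1 + 3 * INR n / INR m) * INR N * Savg + c * INR p + 1) by (field; lra).
  assert (c * INR M * Savg <= ((1 + 3 * INR n / INR m) * INR N + c) * Savg)
    by (apply Rmult_le_compat_r; lra).
  assert (c * Savg <= c * INR p) by (apply Rmult_le_compat_l; lra).
  nra.
Qed.

Lemma one_plus_three_ratio_pos n m : (1 <= m)%nat -> 0 < 1 + 3 * INR n / INR m.
Proof.
  intros Hm. assert (0 < INR m) by (apply lt_0_INR; lia).
  assert (0 <= 3 * INR n / INR m).
  { unfold Rdiv. apply Rmult_le_pos; [pose proof (pos_INR n); lra | apply Rlt_le, Rinv_0_lt_compat; lra]. }
  lra.
Qed.

Lemma Dens_le_sum_Dens {A : Type} (X : (nat -> A) -> Prop) K n m p w z x :
  SeparatingFamily X n m p w z -> X x ->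
  length w = n -> (forall i, (1 <= i <= p)%nat -> length (z i) = m) ->
  (1 <= n)%nat -> (1 <= m)%nat ->
  Dens K w x <= (1 + 3 * INR n / INR m) * sumR (fun i => Dens K (z i) x) 1 p.
Proof.
  intros HB Hx Hw Hz Hn Hm.
  set (c' := 1 + 3 * INR n / INR m).
  set (C := INR (fibre_bound ((K + 1) * n) ((K + 1) * m)) * INR p + 1).
  assert (Hc' : 0 <= c') by (apply Rlt_le, one_plus_three_ratio_pos, Hm).
  rewrite <- (Rplus_0_r (c' * _)).
  apply (IsLimsup_le _ _ _ (Dens_IsLimsup K w x)).
  apply LimsupLe_eventually_le with
    (v := fun N => c' * sumR (fun i => avgR K (z i) x ((N * n + m - 1) / m)) 1 p + C / INR N).
  { exists 1%nat. intros N HN. apply (avgR_le_sum_avgR X); assumption. }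
  apply LimsupLe_plus; [|apply LimsupLe_div_INR].
  apply LimsupLe_scal; [exact Hc'|].
  apply (LimsupLe_comp (fun M => sumR (fun i => avgR K (z i) x M) 1 p)).
  - intros N1. exists (N1 * m)%nat. intros N HN.
    pose proof (Nat.div_mod_eq (N * n + m - 1) m).
    pose proof (Nat.mod_upper_bound (N * n + m - 1) m ltac:(lia)). nia.
  - apply LimsupLe_sumR. intros i _. exact (proj1 (Dens_IsLimsup K (z i) x)).
Qed.

Theorem mainTheorem17 (A : Type) (enumA : list A) (HA : forall a : A, In a enumA)
  (X : (nat -> A) -> Prop) (HX : IsSubshift X)
  (K : nat) (HK : (0 < K)%nat)
  (n m p : nat) (w : list A) (z : nat -> list A)
  (Hw : InLang X w /\ length w = n)
  (Hp : (1 <= p)%nat)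
  (Hz : forall i, (1 <= i <= p)%nat -> InLang X (z i) /\ length (z i) = m)
  (HB : forall y : list A, InLang X y -> (length y > Nat.max n m)%nat ->
        forall j j' : nat, (1 <= j)%nat -> (j < j')%nat ->
        (j' <= length y - Nat.max m n)%nat ->
        subword y j n = w -> subword y j' n = w ->
        exists i k, (1 <= i <= p)%nat /\ (j <= k < j')%nat /\ subword y k m = z i) :
  forall x : nat -> A, X x ->
    exists j, (1 <= j <= p)%nat /\
      Dens K (z j) x >= / (INR p * (1 + 3 * INR n / INR m)) * Dens K w x.
Proof.
  intros x Hx.
  destruct Hw as [[Hw_ne _] Hn].
  destruct (Hz 1%nat ltac:(lia)) as [[Hz_ne _] Hm].
  assert (Hn1 : (1 <= n)%nat) by (destruct w; [congruence | simpl in Hn; lia]).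
  assert (Hm1 : (1 <= m)%nat) by (destruct (z 1%nat); [congruence | simpl in Hm; lia]).
  assert (Hzl : forall i, (1 <= i <= p)%nat -> length (z i) = m) by (intros; apply Hz; assumption).
  pose proof (Dens_le_sum_Dens X K n m p w z x HB Hx Hn Hzl Hn1 Hm1) as Hsum.
  destruct (sumR_pigeonhole (fun i => Dens K (z i) x) 1 p Hp) as [j [Hj Hmax]].
  exists j. split; [lia|].
  set (c' := 1 + 3 * INR n / INR m) in *.
  assert (Hc' : 0 < c') by (apply one_plus_three_ratio_pos, Hm1).
  assert (Rp : 0 < INR p) by (apply lt_0_INR; lia).
  apply Rle_ge. rewrite Rinv_mult, Rmult_assoc.
  apply Rmult_le_reg_l with (INR p); [exact Rp|]. rewrite <- Rmult_assoc, Rinv_r, Rmult_1_l by lra.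
  apply Rmult_le_reg_l with c'; [exact Hc'|]. rewrite <- Rmult_assoc, Rinv_r, Rmult_1_l by lra.
  assert (c' * sumR (fun i => Dens K (z i) x) 1 p <= c' * (INR p * Dens K (z j) x))
    by (apply Rmult_le_compat_l; lra).
  lra.
Qed.
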